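(* Let $D=\{x\in X : \langle a,x\rangle=\beta\}$ with $X=[\alpha'_1,\alpha''_1]\times\cdots\times[\alpha'_n,\alpha''_n]$, where $\alpha'_i<\alpha''_i$ are finite, $a=(a_1,\dots,a_n)^\top$ has $a_i>0$ for all $i\in I=\{1,\dots,n\}$, $\beta\in\mathbb{R}$, and $D\neq\varnothing$. Let $f:\mathbb{R}^n\to\mathbb{R}$ be locally Lipschitz on $X$. Then for a point $x^*$ the following are equivalent: (1) $x^*\in D$ and there exists $g^*\in\partial^{\uparrow}f(x^* )$ such that $\langle g^*,x-x^*\rangle\ge 0$ for all $x\in D$ (i.e. $x^*$ solves the variational inequality (VI)); (2) $x^*\in D$ and there exist $g^*\in\partial^{\uparrow}f(x^* )$ and $\lambda\in\mathbb{R}$ such that $\langle g^*-\lambda a,x-x^*\rangle\ge0$ for all $x\in X$; (3) $x^*\in D$ and there exist $g^*\in\partial^{\uparrow}f(x^* )$ and $\lambda\in\mathbb{R}$ such that for each $i\in I$: $(1/a_i)g^*_i\ge\lambda$ if $x^*_i=\alpha'_i$; $(1/a_i)g^*_i=\lambda$ if $x^*_i\in(\alpha'_i,\alpha''_i)$; $(1/a_i)g^*_i\le\lambda$ if $x^*_i=\alpha''_i$; (4) $x^*\in D$ and there exists $g^*\in\partial^{\uparrow}f(x^* )$ such that for all $i,j\in I$, $i\ne j$: if $(1/a_i)g^*_i>(1/a_j)g^*_j$ then $x^*_i=\alpha'_i$ or $x^*_j=\alpha''_j$; (5) $x^*\in D$ and there exists $g^*\in\partial^{\uparrow}f(x^*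 )$ such that for all $i,j\in I$, $i\neq j$: if $x^*_i\in(\alpha'_i,\alpha''_i]$ and $x^*_j\in[\alpha'_j,\alpha''_j)$ then $(1/a_i)g^*_i\le(1/a_j)g^*_j$.
   Context: For $f$ Lipschitz continuous near $x$, the upper Clarke–Rockafellar derivative is $f^{\uparrow}(x;p)=\limsup_{y\to x,\ \alpha\searrow0}(f(y+\alpha p)-f(y))/\alpha$, and the (Clarke) generalized gradient is $\partial^{\uparrow}f(x)=\{g\in\mathbb{R}^n:\langle g,p\rangle\le f^{\uparrow}(x;p)\ \forall p\in\mathbb{R}^n\}$, a nonempty convex compact set. *)

From Stdlib Require Import Reals.
From mathcomp Require Import ssreflect ssrfun ssrbool eqtype ssrnat seq fintype bigop.

Open Scope R_scope.

Definition vec (n : nat) := 'I_n -> R.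

Definition inner {n : nat} (u v : vec n) : R := \big[Rplus/0]_(i < n) (u i * v i).
Definition vnorm {n : nat} (u : vec n) : R := sqrt (inner u u).
Definition vadd {n : nat} (u v : vec n) : vec n := fun i => u i + v i.
Definition vsub {n : nat} (u v : vec n) : vec n := fun i => u i - v i.
Definition vscale {n : nat} (c : R) (u : vec n) : vec n := fun i => c * u i.

Definition lipschitz_near {n : nat} (f : vec n -> R) (x : vec n) : Prop :=
  exists L delta, 0 < delta /\
    forall y z, vnorm (vsub y x) < delta -> vnorm (vsub z x) < delta ->
      Rabs (f y - f z) <= L * vnorm (vsub y z).

(* c <= f^{up}(x;p) = limsup_{y -> x, alpha \searrow 0} (f(y+alpha p) - f(y))/alpha,
   i.e. the literal unfolding of "c <= limsup": for every neighbourhood radius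
   delta, the supremum of the quotient over the delta-neighbourhood is >= c. *)
Definition clarke_ge {n : nat} (c : R) (f : vec n -> R) (x p : vec n) : Prop :=
  forall eps delta, 0 < eps -> 0 < delta ->
    exists y alpha, vnorm (vsub y x) < delta /\ 0 < alpha < delta /\
      c - eps < (f (vadd y (vscale alpha p)) - f y) / alpha.

Definition clarke_subdiff {n : nat} (f : vec n -> R) (x g : vec n) : Prop :=
  forall p : vec n, clarke_ge (inner g p) f x p.

Definition in_box {n : nat} (lo hi : vec n) (x : vec n) : Prop :=
  forall i, lo i <= x i <= hi i.
Definition in_D {n : nat} (lo hi a : vec n) (beta : R) (x : vec n) : Prop :=
  in_box lo hi x /\ inner a x = beta.

(* Only the direction (1) -> (3) needs work.  If the VI holds on D, moving
   mass [t] of the linear constraint from a coordinate above its lower bound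
   to a coordinate below its upper bound stays in D, which forces the ratios
   g_i / a_i of the former to be at most those of the latter; any [lam]
   separating these two finite families of ratios is a Lagrange multiplier.
   Conversely, the multiplier condition makes every term of
   <g - lam a, x - x*> nonnegative on the box, and on D the [lam] part of
   this inner product vanishes.  All of this happens for a fixed g. *)
From Stdlib Require Import Reals Lra.
From HB Require Import structures.
From mathcomp Require Import ssreflect ssrfun ssrbool eqtype ssrnat seq fintype bigop.
Open Scope R_scope.

HB.instance Definition _ :=
  Monoid.isComLaw.Build R 0 Rplus (fun x y z => esym (Rplus_assoc x y z)) Rplus_comm Rplus_0_l.

Lemma big_Rplus_lin (I : Type) (r : seq I) (P : pred I) (F G : I -> R) (c d : R) :
  \big[Rplus/0]_(k <- r | P k) (c * F k + d * G k) =
  c * \big[Rplus/0]_(k <- r | P k) F k + d * \big[Rplus/0]_(k <- r | P k) G k.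
Proof. by elim/big_rec3: _ => [|k x y z _ ->]; ring. Qed.

Lemma big_Rplus_ge0 (I : Type) (r : seq I) (P : pred I) (F : I -> R) :
  (forall k, P k -> 0 <= F k) -> 0 <= \big[Rplus/0]_(k <- r | P k) F k.
Proof. by move=> F_ge0; apply: (big_ind (fun x => 0 <= x)) => //; [lra | move=> x y; lra]. Qed.

Lemma bigRmax_ge (I : eqType) (r : seq I) (P : pred I) (F : I -> R) (c : R) (i : I) :
  i \in r -> P i -> F i <= \big[Rmax/c]_(k <- r | P k) F k.
Proof.
elim: r => // x r IH; rewrite inE big_cons => /orP [/eqP <- | ir] Pi.
  by rewrite Pi; apply: Rmax_l.
case: (P x); last exact: IH.
by apply: Rle_trans (IH ir Pi) (Rmax_r _ _).
Qed.

Lemma bigRmin_le (I : eqType) (r : seq I) (P : pred I) (F : I -> R) (c : R) (i : I) :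
  i \in r -> P i -> \big[Rmin/c]_(k <- r | P k) F k <= F i.
Proof.
elim: r => // x r IH; rewrite inE big_cons => /orP [/eqP <- | ir] Pi.
  by rewrite Pi; apply: Rmin_l.
case: (P x); last exact: IH.
by apply: Rle_trans (Rmin_r _ _) (IH ir Pi).
Qed.

Lemma separating_value (I : finType) (A B : pred I) (r : I -> R) :
  (forall i j, A i -> B j -> r i <= r j) ->
  exists lam, (forall i, A i -> r i <= lam) /\ (forall j, B j -> lam <= r j).
Proof.
move=> rAB; pose c := \big[Rmin/0]_(k | B k) r k.
exists (\big[Rmax/c]_(k | A k) r k); split=> [i Ai | j Bj].
  exact: bigRmax_ge (mem_index_enum i) Ai.
apply: (big_ind (fun x => x <= r j)) => [|x y|i Ai]; last exact: rAB.
  exact: bigRmin_le (mem_index_enum j) Bj.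
exact: Rmax_lub.
Qed.

Section InnerProduct.
Context {n : nat}.
Implicit Types (u v w x y : vec n) (c : R).

Lemma inner_vaddr u x y : inner u (vadd x y) = inner u x + inner u y.
Proof. by rewrite /inner -big_split /=; apply: eq_bigr => k _; rewrite /vadd; ring. Qed.

Lemma inner_vsubr u x y : inner u (vsub x y) = inner u x - inner u y.
Proof.
rewrite (_ : _ - _ = 1 * inner u x + -1 * inner u y); last by ring.
by rewrite /inner -big_Rplus_lin; apply: eq_bigr => k _; rewrite /vsub; ring.
Qed.

Lemma inner_vsub_scalel u v w c : inner (vsub u (vscale c v)) w = inner u w - c * inner v w.
Proof.
rewrite (_ : _ - _ = 1 * inner u w + - c * inner v w); last by ring.
by rewrite /inner -big_Rplus_lin; apply: eq_bigr => k _; rewrite /vsub /vscale; ring.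
Qed.

Definition vec2 (i j : 'I_n) (s t : R) : vec n :=
  fun k => if k == i then s else if k == j then t else 0.

Lemma inner_vec2 u i j s t : i <> j -> inner u (vec2 i j s t) = u i * s + u j * t.
Proof.
move=> /eqP ij; rewrite /inner (bigD1 i) // (bigD1 j) /=; last by rewrite eq_sym.
rewrite big1 => [|k /andP [/negbTE ki /negbTE kj]]; last by rewrite /vec2 ki kj; ring.
by rewrite /vec2 eqxx eq_sym (negbTE ij) eqxx; ring.
Qed.

End InnerProduct.

Section OptimalityConditions.
Context {n : nat} {lo hi a : vec n} {beta : R} {xs : vec n}.
Hypothesis lo_lt_hi : forall i, lo i < hi i.
Hypothesis a_gt0 : forall i, 0 < a i.
Hypothesis xs_in_D : in_D lo hi a beta xs.
Implicit Types (g : vec n) (lam : R).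

Definition vi_on_D g := forall x, in_D lo hi a beta x -> 0 <= inner g (vsub x xs).

Definition vi_on_box g lam :=
  forall x, in_box lo hi x -> 0 <= inner (vsub g (vscale lam a)) (vsub x xs).

Definition multiplier_rule g lam :=
  forall i, (xs i = lo i -> g i / a i >= lam) /\
            (lo i < xs i < hi i -> g i / a i = lam) /\
            (xs i = hi i -> g i / a i <= lam).

Definition exchange_rule g :=
  forall i j, i <> j -> g i / a i > g j / a j -> xs i = lo i \/ xs j = hi j.

Definition monotone_ratios g :=
  forall i j, i <> j -> lo i < xs i <= hi i -> lo j <= xs j < hi j ->
    g i / a i <= g j / a j.

Lemma vi_on_box_vi_on_D g lam : vi_on_box g lam -> vi_on_D g.
Proof.
move=> vi x [x_box ax]; have := vi x x_box.
rewrite inner_vsub_scalel !inner_vsubr ax; case: xs_in_D => _ ->; lra.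
Qed.

Lemma multiplier_term_ge0 g lam i (t : R) :
  (xs i = lo i -> g i / a i >= lam) ->
  (lo i < xs i < hi i -> g i / a i = lam) ->
  (xs i = hi i -> g i / a i <= lam) ->
  lo i <= t <= hi i -> 0 <= (g i - lam * a i) * (t - xs i).
Proof.
move=> at_lo inside at_hi [t_lo t_hi]; have ai := a_gt0 i.
have [xs_lo xs_hi] := (proj1 xs_in_D) i.
rewrite (_ : g i - lam * a i = a i * (g i / a i - lam)); last by field; lra.
case: xs_lo => [xs_lo | /esym xs_lo]; last first.
  by have := at_lo xs_lo; rewrite xs_lo => ?; apply: Rmult_le_pos; nra.
case: xs_hi => [xs_hi | xs_hi]; first by rewrite inside //; lra.
have := at_hi xs_hi; rewrite xs_hi => ?.
rewrite (_ : _ * _ = a i * ((lam - g i / a i) * (hi i - t))); last by ring.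
by apply: Rmult_le_pos; nra.
Qed.

Lemma multiplier_rule_vi_on_box g lam : multiplier_rule g lam -> vi_on_box g lam.
Proof.
move=> rule x x_box; apply: big_Rplus_ge0 => k _; have [? [? ?]] := rule k.
exact: multiplier_term_ge0.
Qed.

Lemma exchange_in_D i j : i <> j -> lo i < xs i -> xs j < hi j ->
  exists2 t, 0 < t & in_D lo hi a beta (vadd xs (vec2 i j (- (t / a i)) (t / a j))).
Proof.
move=> ij xs_i xs_j; have ai := a_gt0 i; have aj := a_gt0 j.
case: xs_in_D => xs_box a_xs.
pose t := Rmin (a i * (xs i - lo i)) (a j * (hi j - xs j)).
have t_i : t / a i <= xs i - lo i.
  apply: (Rmult_le_reg_l (a i)) => //; rewrite (_ : _ * (t / _) = t); last by field; lra.
  exact: Rmin_l.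
have t_j : t / a j <= hi j - xs j.
  apply: (Rmult_le_reg_l (a j)) => //; rewrite (_ : _ * (t / _) = t); last by field; lra.
  exact: Rmin_r.
have t_gt0 : 0 < t by apply: Rmin_pos; apply: Rmult_lt_0_compat; lra.
have ti_ge0 : 0 <= t / a i by apply: Rlt_le; apply: Rdiv_lt_0_compat.
have tj_ge0 : 0 <= t / a j by apply: Rlt_le; apply: Rdiv_lt_0_compat.
exists t => //; split=> [k | ].
  have := xs_box k; rewrite /vadd /vec2.
  case: eqP => [-> | _]; last case: eqP => [-> | _]; lra.
rewrite inner_vaddr inner_vec2 // a_xs; field; lra.
Qed.

Lemma vi_on_D_exchange_rule g : vi_on_D g -> exchange_rule g.
Proof.
move=> vi i j ij g_ij; have ai := a_gt0 i; have aj := a_gt0 j.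
have [[lo_i _] [_ hi_j]] := (proj1 xs_in_D i, proj1 xs_in_D j).
case: lo_i => [lo_i | /esym]; last by left.
case: hi_j => [hi_j | ]; last by right.
have [t t_gt0 x_in_D] := exchange_in_D i j ij lo_i hi_j.
have := vi _ x_in_D; rewrite inner_vsubr inner_vaddr inner_vec2 //.
have : t * (g j / a j) < t * (g i / a i) by apply: Rmult_lt_compat_l.
rewrite /Rdiv; lra.
Qed.

Lemma exchange_rule_monotone_ratios g : exchange_rule g -> monotone_ratios g.
Proof. by move=> rule i j ij xs_i xs_j; apply: Rnot_gt_le => /(rule i j ij) []; lra. Qed.

Definition above_lo k : bool := if Rlt_dec (lo k) (xs k) then true else false.
Definition below_hi k : bool := if Rlt_dec (xs k) (hi k) then true else false.

Lemma above_loP k : reflect (lo k < xs k) (above_lo k).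
Proof. by rewrite /above_lo; case: Rlt_dec; constructor. Qed.

Lemma below_hiP k : reflect (xs k < hi k) (below_hi k).
Proof. by rewrite /below_hi; case: Rlt_dec; constructor. Qed.

Lemma monotone_ratios_multiplier_rule g : monotone_ratios g -> exists lam, multiplier_rule g lam.
Proof.
move=> mono; have [lam [A_le B_ge]] : exists lam,
    (forall i, above_lo i -> g i / a i <= lam) /\ (forall j, below_hi j -> lam <= g j / a j).
  apply: separating_value => i j /above_loP xs_i /below_hiP xs_j.
  have [-> | /eqP ij] := eqVneq i j; first exact: Rle_refl.
  by apply: mono => //; have [? ?] := proj1 xs_in_D i; have [? ?] := proj1 xs_in_D j; lra.
exists lam => i; have := proj1 xs_in_D i; have := lo_lt_hi i => ? [? ?].
split; [|split] => [? | [? ?] | ?].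
- by apply/Rle_ge/B_ge/below_hiP; lra.
- by apply: Rle_antisym; [apply/A_le/above_loP | apply/B_ge/below_hiP]; lra.
- by apply/A_le/above_loP; lra.
Qed.

Lemma monotone_ratios_vi_on_D g : monotone_ratios g -> vi_on_D g.
Proof.
move=> /monotone_ratios_multiplier_rule [lam /multiplier_rule_vi_on_box].
exact: vi_on_box_vi_on_D.
Qed.

Lemma vi_on_D_iff_vi_on_box g : vi_on_D g <-> exists lam, vi_on_box g lam.
Proof.
split=> [/vi_on_D_exchange_rule/exchange_rule_monotone_ratios | [lam]].
  by move=> /monotone_ratios_multiplier_rule [lam /multiplier_rule_vi_on_box]; exists lam.
exact: vi_on_box_vi_on_D.
Qed.

Lemma vi_on_D_iff_multiplier_rule g : vi_on_D g <-> exists lam, multiplier_rule g lam.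
Proof.
split=> [/vi_on_D_exchange_rule/exchange_rule_monotone_ratios | [lam]].
  exact: monotone_ratios_multiplier_rule.
by move=> /multiplier_rule_vi_on_box; exact: vi_on_box_vi_on_D.
Qed.

Lemma vi_on_D_iff_exchange_rule g : vi_on_D g <-> exchange_rule g.
Proof.
split; first exact: vi_on_D_exchange_rule.
by move=> /exchange_rule_monotone_ratios; exact: monotone_ratios_vi_on_D.
Qed.

Lemma vi_on_D_iff_monotone_ratios g : vi_on_D g <-> monotone_ratios g.
Proof.
split; last exact: monotone_ratios_vi_on_D.
by move=> /vi_on_D_exchange_rule; exact: exchange_rule_monotone_ratios.
Qed.

End OptimalityConditions.

Theorem proposition2p2 (n : nat) (lo hi a : vec n) (beta : R) (f : vec n -> R)
  (Hlohi : forall i, lo i < hi i)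
  (Ha : forall i, 0 < a i)
  (HD : exists x, in_D lo hi a beta x)
  (Hf : forall x, in_box lo hi x -> lipschitz_near f x)
  (xs : vec n) :
  let P1 := in_D lo hi a beta xs /\
      exists g, clarke_subdiff f xs g /\
        forall x, in_D lo hi a beta x -> 0 <= inner g (vsub x xs) in
  let P2 := in_D lo hi a beta xs /\
      exists g lam, clarke_subdiff f xs g /\
        forall x, in_box lo hi x -> 0 <= inner (vsub g (vscale lam a)) (vsub x xs) in
  let P3 := in_D lo hi a beta xs /\
      exists g lam, clarke_subdiff f xs g /\
        forall i, (xs i = lo i -> g i / a i >= lam) /\
                  (lo i < xs i < hi i -> g i / a i = lam) /\
                  (xs i = hi i -> g i / a i <= lam) in
  let P4 := in_D lo hi a beta xs /\
      exists g, clarke_subdiff f xs g /\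
        forall i j, i <> j -> g i / a i > g j / a j -> xs i = lo i \/ xs j = hi j in
  let P5 := in_D lo hi a beta xs /\
      exists g, clarke_subdiff f xs g /\
        forall i j, i <> j -> lo i < xs i <= hi i -> lo j <= xs j < hi j ->
          g i / a i <= g j / a j in
  (P1 <-> P2) /\ (P1 <-> P3) /\ (P1 <-> P4) /\ (P1 <-> P5).
Proof.
have box (D : in_D lo hi a beta xs) := vi_on_D_iff_vi_on_box Hlohi Ha D.
have mult (D : in_D lo hi a beta xs) := vi_on_D_iff_multiplier_rule Hlohi Ha D.
have exch (D : in_D lo hi a beta xs) := vi_on_D_iff_exchange_rule Hlohi Ha D.
have mono (D : in_D lo hi a beta xs) := vi_on_D_iff_monotone_ratios Hlohi Ha D.
cbv zeta; split; [|split; [|split]]; split=> -[D [g]].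
- by move=> [g_sub /(box D) [lam vi]]; split=> //; exists g, lam.
- by move=> [lam [g_sub vi]]; split=> //; exists g; split=> //; apply/(box D); exists lam.
- by move=> [g_sub /(mult D) [lam rule]]; split=> //; exists g, lam.
- by move=> [lam [g_sub rule]]; split=> //; exists g; split=> //; apply/(mult D); exists lam.
- by move=> [g_sub /(exch D) rule]; split=> //; exists g.
- by move=> [g_sub /(exch D) vi]; split=> //; exists g.
- by move=> [g_sub /(mono D) rule]; split=> //; exists g.
- by move=> [g_sub /(mono D) vi]; split=> //; exists g.
Qed.
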